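(* Let $k_1,k_3,a_2,a_5$ be real constants with $(a_2,a_5)\neq(0,0)$, let $r=\sqrt{x^2+y^2}$, and consider the Newtonian system $\ddot x=-\partial_x V_5$, $\ddot y=-\partial_y V_5$ on the region where $r\neq 0$ and $a_2y-a_5x\neq0$, with potential $$V_5=\frac{k_1}{(a_2y-a_5x)^2}+\frac{k_3(a_2x+a_5y)}{r(a_2y-a_5x)^2}.$$ Let \begin{align*} \tilde J_3=&(x\dot y-y\dot x)^2(a_2\dot x+a_5\dot y)+\frac{2k_1r^2}{(a_2y-a_5x)^2}(a_2\dot x+a_5\dot y)+\frac{k_3r}{a_2y-a_5x}(a_2\dot y-a_5\dot x)\\ &-\frac{k_3(a_2x+a_5y)}{r(a_2y-a_5x)}(x\dot y-y\dot x)+\frac{2k_3(a_2x+a_5y)r}{(a_2y-a_5x)^2}(a_2\dot x+a_5\dot y). \end{align*} Then the time-dependent function $$J_5=-t\,\tilde J_3+(a_2x+a_5y)(x\dot y-y\dot x)^2+\frac{2k_1r^2(a_2x+a_5y)}{(a_2y-a_5x)^2}+\frac{2k_3r(a_2x+a_5y)^2}{(a_2y-a_5x)^2}+k_3r$$ is constant along every solution (as is $\tilde J_3$). *)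

From Stdlib Require Import Reals.
From Coquelicot Require Import Coquelicot.
Open Scope R_scope.

Definition rad (x y : R) : R := sqrt (x ^ 2 + y ^ 2).

Definition V5 (k1 k3 a2 a5 : R) (x y : R) : R :=
  k1 / (a2 * y - a5 * x) ^ 2
  + k3 * (a2 * x + a5 * y) / (rad x y * (a2 * y - a5 * x) ^ 2).

Definition J3t (k1 k3 a2 a5 : R) (x y vx vy : R) : R :=
  let r := rad x y in
  let L := x * vy - y * vx in
  let D := a2 * y - a5 * x in
  let S := a2 * x + a5 * y in
  L ^ 2 * (a2 * vx + a5 * vy)
  + 2 * k1 * r ^ 2 / D ^ 2 * (a2 * vx + a5 * vy)
  + k3 * r / D * (a2 * vy - a5 * vx)
  - k3 * S / (r * D) * L
  + 2 * k3 * S * r / D ^ 2 * (a2 * vx + a5 * vy).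

Definition J5 (k1 k3 a2 a5 : R) (t x y vx vy : R) : R :=
  let r := rad x y in
  let L := x * vy - y * vx in
  let D := a2 * y - a5 * x in
  let S := a2 * x + a5 * y in
  - t * J3t k1 k3 a2 a5 x y vx vy
  + S * L ^ 2
  + 2 * k1 * r ^ 2 * S / D ^ 2
  + 2 * k3 * r * S ^ 2 / D ^ 2
  + k3 * r.

Definition is_solution (k1 k3 a2 a5 a b : R) (x y : R -> R) : Prop :=
  forall t, a < t < b ->
    rad (x t) (y t) <> 0 /\ a2 * y t - a5 * x t <> 0 /\
    ex_derive x t /\ ex_derive y t /\
    ex_derive (Derive x) t /\ ex_derive (Derive y) t /\
    Derive (Derive x) t = - Derive (fun u => V5 k1 k3 a2 a5 u (y t)) (x t) /\
    Derive (Derive y) t = - Derive (fun v => V5 k1 k3 a2 a5 (x t) v) (y t).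

(* Along a solution, the time derivative of J~3 is a rational function of
   x, y, r and the velocities whose numerator vanishes once r^2 is replaced by
   x^2 + y^2.  Splitting J5 = - t J~3 + K, the same computation gives
   dK/dt = J~3, so dJ5/dt = - J~3 - t * 0 + J~3 = 0.  A function with zero
   derivative on an interval is constant there. *)

From Stdlib Require Import Reals Lra.
From Coquelicot Require Import Coquelicot.
Open Scope R_scope.

Definition V5_dx (k1 k3 a2 a5 u v : R) : R :=
  let r := rad u v in let D := a2 * v - a5 * u in let S := a2 * u + a5 * v in
  2 * k1 * a5 / D ^ 3
  + k3 * (a2 / (r * D ^ 2) - S * u / (r ^ 3 * D ^ 2) + 2 * a5 * S / (r * D ^ 3)).

Definition V5_dy (k1 k3 a2 a5 u v : R) : R :=
  let r := rad u v in let D := a2 * v - a5 * u in let S := a2 * u + a5 * v in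
  - 2 * k1 * a2 / D ^ 3
  + k3 * (a5 / (r * D ^ 2) - S * v / (r ^ 3 * D ^ 2) - 2 * a2 * S / (r * D ^ 3)).

Definition J5_static (k1 k3 a2 a5 : R) (x y vx vy : R) : R :=
  let r := rad x y in
  let L := x * vy - y * vx in
  let D := a2 * y - a5 * x in
  let S := a2 * x + a5 * y in
  S * L ^ 2 + 2 * k1 * r ^ 2 * S / D ^ 2 + 2 * k3 * r * S ^ 2 / D ^ 2 + k3 * r.

Lemma J5_split k1 k3 a2 a5 t x y vx vy :
  J5 k1 k3 a2 a5 t x y vx vy =
  - t * J3t k1 k3 a2 a5 x y vx vy + J5_static k1 k3 a2 a5 x y vx vy.
Proof. unfold J5, J5_static; ring. Qed.

(* The squared radius in the normal form produced by [auto_derive]. *)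
Lemma rad_sq_pos (u v : R) : rad u v <> 0 -> 0 < u * (u * 1) + v * (v * 1).
Proof.
intros Hr; apply Rnot_le_lt; intros Hle; apply Hr.
unfold rad; rewrite <- sqrt_0; f_equal; nra.
Qed.

Lemma pow_SS_sq (r s : R) (n : nat) : r * r = s -> r ^ S (S n) = s * r ^ n.
Proof. intros Hrr; rewrite <- Hrr; simpl; ring. Qed.

Ltac nonzero := repeat apply Rmult_integral_contrapositive_currified; auto; try lra.

(* Clears denominators, then uses [r * r = s] to lower every power of [r]
   to degree at most one, after which the numerator vanishes identically. *)
Ltac field_mod_sq r Hrr :=
  apply Rminus_diag_uniq; field_simplify; [| split; nonzero];
  unfold Rdiv; apply Rmult_eq_0_compat_r;
  repeat rewrite (pow_SS_sq r _ _ Hrr); ring.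

Lemma is_derive_V5_x k1 k3 a2 a5 u v : rad u v <> 0 -> a2 * v - a5 * u <> 0 ->
  is_derive (fun u => V5 k1 k3 a2 a5 u v) u (V5_dx k1 k3 a2 a5 u v).
Proof.
intros Hr HD; pose proof (rad_sq_pos _ _ Hr).
unfold V5, V5_dx, rad, Rminus in *.
replace (u ^ 2 + v ^ 2) with (u * (u * 1) + v * (v * 1)) in * by ring.
set (r := sqrt _) in *.
auto_derive.
- repeat split; nonzero.
- fold r; field; repeat split; nonzero.
Qed.

Lemma is_derive_V5_y k1 k3 a2 a5 u v : rad u v <> 0 -> a2 * v - a5 * u <> 0 ->
  is_derive (fun v => V5 k1 k3 a2 a5 u v) v (V5_dy k1 k3 a2 a5 u v).
Proof.
intros Hr HD; pose proof (rad_sq_pos _ _ Hr).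
unfold V5, V5_dy, rad, Rminus in *.
replace (u ^ 2 + v ^ 2) with (u * (u * 1) + v * (v * 1)) in * by ring.
set (r := sqrt _) in *.
auto_derive.
- repeat split; nonzero.
- fold r; field; repeat split; nonzero.
Qed.

Lemma is_derive_const_on (a b : R) (f : R -> R) :
  (forall t, a < t < b -> is_derive f t 0) ->
  forall t1 t2, a < t1 < b -> a < t2 < b -> f t1 = f t2.
Proof.
intros Hd t1 t2 H1 H2.
destruct (Rtotal_order t1 t2) as [h | [-> | h]].
- apply eq_is_derive; [intros t Ht; apply Hd; lra | exact h].
- reflexivity.
- symmetry; apply eq_is_derive; [intros t Ht; apply Hd; lra | exact h].
Qed.

Section Solution.

Variables (k1 k3 a2 a5 a b : R) (x y : R -> R).
Hypothesis Hsol : is_solution k1 k3 a2 a5 a b x y.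

Definition J3t_along (t : R) : R :=
  J3t k1 k3 a2 a5 (x t) (y t) (Derive x t) (Derive y t).

Definition J5_static_along (t : R) : R :=
  J5_static k1 k3 a2 a5 (x t) (y t) (Derive x t) (Derive y t).

Lemma solution_accel t : a < t < b ->
  Derive (Derive x) t = - V5_dx k1 k3 a2 a5 (x t) (y t) /\
  Derive (Derive y) t = - V5_dy k1 k3 a2 a5 (x t) (y t).
Proof.
intros Ht; destruct (Hsol t Ht) as (Hr & HD & _ & _ & _ & _ & Ax & Ay).
rewrite Ax, Ay; split; f_equal; apply is_derive_unique.
- exact (is_derive_V5_x k1 k3 a2 a5 _ _ Hr HD).
- exact (is_derive_V5_y k1 k3 a2 a5 _ _ Hr HD).
Qed.

(* Differentiates along the solution and substitutes the equations of motion,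
   leaving an identity in [r := rad (x t) (y t)] with [Hrr : r * r = ...]. *)
Ltac derive_along_solution t Ht :=
  destruct (solution_accel t Ht) as [Ax Ay];
  destruct (Hsol t Ht) as (Hr & HD & ex & ey & evx & evy & _);
  pose proof (rad_sq_pos _ _ Hr) as Hpos;
  unfold J3t_along, J5_static_along, J5_static, J3t, V5_dx, V5_dy, rad, Rminus in *;
  replace (x t ^ 2 + y t ^ 2) with (x t * (x t * 1) + y t * (y t * 1)) in * by ring;
  auto_derive; [repeat split; auto; nonzero |];
  change (Derive (fun s => x s) t) with (Derive x t);
  change (Derive (fun s => y s) t) with (Derive y t);
  change (Derive (fun s => Derive x s) t) with (Derive (Derive x) t);
  change (Derive (fun s => Derive y s) t) with (Derive (Derive y) t);
  rewrite Ax, Ay;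
  pose proof (sqrt_sqrt _ (Rlt_le _ _ Hpos)) as Hrr;
  set (r := sqrt _) in *;
  clearbody r; clear Ax Ay.

Lemma is_derive_J3t_along t : a < t < b -> is_derive J3t_along t 0.
Proof. intros Ht; derive_along_solution t Ht; field_mod_sq r Hrr. Qed.

Lemma is_derive_J5_static_along t : a < t < b ->
  is_derive J5_static_along t (J3t_along t).
Proof. intros Ht; derive_along_solution t Ht; field_mod_sq r Hrr. Qed.

Lemma is_derive_J5_along t : a < t < b ->
  is_derive (fun t => J5 k1 k3 a2 a5 t (x t) (y t) (Derive x t) (Derive y t)) t 0.
Proof.
intros Ht.
pose proof (is_derive_J3t_along t Ht) as H3.
pose proof (is_derive_J5_static_along t Ht) as HK.
apply is_derive_ext with (fun s => - s * J3t_along s + J5_static_along s).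
{ intros s; symmetry; apply J5_split. }
auto_derive.
- split; [exists 0; exact H3 | split; [exists (J3t_along t); exact HK | exact I]].
- change (Derive (fun s => J3t_along s) t) with (Derive J3t_along t).
  change (Derive (fun s => J5_static_along s) t) with (Derive J5_static_along t).
  rewrite (is_derive_unique _ _ _ H3), (is_derive_unique _ _ _ HK); ring.
Qed.

End Solution.

Theorem mainTheorem7 (k1 k3 a2 a5 : R) (Ha : a2 <> 0 \/ a5 <> 0)
  (a b : R) (x y : R -> R) (Hsol : is_solution k1 k3 a2 a5 a b x y) :
  (forall t1 t2, a < t1 < b -> a < t2 < b ->
     J3t k1 k3 a2 a5 (x t1) (y t1) (Derive x t1) (Derive y t1)
     = J3t k1 k3 a2 a5 (x t2) (y t2) (Derive x t2) (Derive y t2)) /\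
  (forall t1 t2, a < t1 < b -> a < t2 < b ->
     J5 k1 k3 a2 a5 t1 (x t1) (y t1) (Derive x t1) (Derive y t1)
     = J5 k1 k3 a2 a5 t2 (x t2) (y t2) (Derive x t2) (Derive y t2)).
Proof.
split.
- exact (is_derive_const_on a b _ (is_derive_J3t_along _ _ _ _ _ _ _ _ Hsol)).
- exact (is_derive_const_on a b _ (is_derive_J5_along _ _ _ _ _ _ _ _ Hsol)).
Qed.
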